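(* Let $f$ be a complex-valued harmonic function on $\mathbb{C}$. If $\operatorname{int}S\neq\varnothing$, then $f(\mathbb{C})$ is either a single point or a line. In either case, $S=\mathbb{C}$ and there exists $w_0\in\mathbb{C}$ with $\mathrm{Val}(f,w_0)=\infty$.
   Context: Writing $f=u+iv$, $J_f=u_xv_y-u_yv_x$ and $S=\{z\in\mathbb{C}: J_f(z)=0\}$. $\mathrm{Val}(f,w)$ is the number (possibly infinite) of distinct $z\in\mathbb{C}$ with $f(z)=w$. *)

From Stdlib Require Import Reals List.
From Coquelicot Require Import Coquelicot.
Open Scope R_scope.

Definition ure (f : C -> C) (x y : R) : R := Re (f (x, y)).
Definition vim (f : C -> C) (x y : R) : R := Im (f (x, y)).

Definition px (g : R -> R -> R) (x y : R) : R := Derive (fun t => g t y) x.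
Definition py (g : R -> R -> R) (x y : R) : R := Derive (fun t => g x t) y.

Definition C1 (g : R -> R -> R) : Prop :=
  forall x y : R,
    ex_derive (fun t => g t y) x /\ ex_derive (fun t => g x t) y /\
    continuous (fun p : R * R => g (fst p) (snd p)) (x, y) /\
    continuous (fun p : R * R => px g (fst p) (snd p)) (x, y) /\
    continuous (fun p : R * R => py g (fst p) (snd p)) (x, y).

Definition C2 (g : R -> R -> R) : Prop := C1 g /\ C1 (px g) /\ C1 (py g).

Definition harmonic_R (g : R -> R -> R) : Prop :=
  C2 g /\ forall x y : R, px (px g) x y + py (py g) x y = 0.

Definition harmonic (f : C -> C) : Prop :=
  harmonic_R (ure f) /\ harmonic_R (vim f).

Definition jac (f : C -> C) (x y : R) : R :=
  px (ure f) x y * py (vim f) x y - py (ure f) x y * px (vim f) x y.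

Definition inS (f : C -> C) (z : C) : Prop := jac f (Re z) (Im z) = 0.

Definition interior_S_nonempty (f : C -> C) : Prop :=
  exists (z0 : C) (r : R), 0 < r /\
    forall z : C, Cmod (z - z0) < r -> inS f z.

Definition image_is_point (f : C -> C) : Prop :=
  exists c : C, forall z : C, f z = c.

Definition image_is_line (f : C -> C) : Prop :=
  exists a b : C, b <> 0%C /\
    forall w : C, (exists z : C, f z = w) <-> (exists t : R, w = (a + RtoC t * b)%C).

Definition Val_infinite (f : C -> C) (w : C) : Prop :=
  ~ exists l : list C, forall z : C, f z = w -> In z l.

(* Write [u = Re f] and [v = Im f]. On a disc where [J_f = u_x v_y - u_y v_x] vanishes, either
   [grad u = 0], so [u] is constant there, or [grad v = lam grad u]; differentiating this and using
   the Laplace equations and [u_xy = u_yx] shows that [grad lam] is both parallel and orthogonal to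
   [grad u], so [lam] is constant. Either way a nontrivial affine combination [al u + be v + ga]
   vanishes on a disc, hence everywhere by unique continuation. Therefore [J_f = 0] and
   [f = a0 + t b0] for a real harmonic [t]: [f(C)] is a point if [t] is constant; otherwise [t] maps
   onto [R] (a harmonic function bounded on one side is constant) and has an infinite level set.

   Unique continuation and the one-sided Liouville theorem both come from the cosine coefficients
   [A_k(r)] of [u] on the circles of radius [r]: they solve Euler's equation
   [r^2 A'' + r A' = k^2 A], hence [A_k(r) = A_k(1) r^k], and a continuous function on a circle all
   of whose cosine coefficients vanish (for every phase) is zero, as one sees by integrating it
   against the powers of [(1 - cos s) / 2]. *)

From Stdlib Require Import Reals List Lra Lia Psatz Classical FunctionalExtensionality.
From Coquelicot Require Import Coquelicot.
Open Scope R_scope.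

(** * Calculus in two real variables *)

Definition continuous2 (F : R -> R -> R) (x y : R) : Prop :=
  continuous (fun p : R * R => F (fst p) (snd p)) (x, y).

Lemma continuous2_plus F G x y :
  continuous2 F x y -> continuous2 G x y -> continuous2 (fun x y => F x y + G x y) x y.
Proof. exact (continuous_plus _ _ _). Qed.

Lemma continuous2_minus F G x y :
  continuous2 F x y -> continuous2 G x y -> continuous2 (fun x y => F x y - G x y) x y.
Proof. exact (continuous_minus _ _ _). Qed.

Lemma continuous2_mult F G x y :
  continuous2 F x y -> continuous2 G x y -> continuous2 (fun x y => F x y * G x y) x y.
Proof. exact (continuous_mult _ _ _). Qed.

Lemma continuous2_opp F x y : continuous2 F x y -> continuous2 (fun x y => - F x y) x y.
Proof. exact (continuous_opp _ _). Qed.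

Lemma continuous2_pow F n x y : continuous2 F x y -> continuous2 (fun x y => F x y ^ n) x y.
Proof.
  intros HF; induction n as [|n IH].
  - exact (continuous_const 1 _).
  - exact (continuous2_mult F (fun x y => F x y ^ n) x y HF IH).
Qed.

Lemma continuous2_const c x y : continuous2 (fun _ _ => c) x y.
Proof. exact (continuous_const c _). Qed.

Lemma continuous2_fst x y : continuous2 (fun x _ => x) x y.
Proof. exact (continuous_fst x y). Qed.

Lemma continuous2_snd x y : continuous2 (fun _ y => y) x y.
Proof. exact (continuous_snd x y). Qed.

Lemma continuous2_comp (g : R -> R -> R) p1 p2 x y :
  continuous2 g (p1 x y) (p2 x y) -> continuous2 p1 x y -> continuous2 p2 x y ->
  continuous2 (fun x y => g (p1 x y) (p2 x y)) x y.
Proof.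
  intros Hg H1 H2.
  exact (continuous_comp_2 (fun z : R * R => p1 (fst z) (snd z))
    (fun z : R * R => p2 (fst z) (snd z)) g (x, y) H1 H2 Hg).
Qed.

Lemma continuous2_cos F x y : continuous2 F x y -> continuous2 (fun x y => cos (F x y)) x y.
Proof. intros HF. exact (continuous_comp _ cos _ HF (continuous_cos _)). Qed.

Lemma continuous2_sin F x y : continuous2 F x y -> continuous2 (fun x y => sin (F x y)) x y.
Proof. intros HF. exact (continuous_comp _ sin _ HF (continuous_sin _)). Qed.

Lemma continuous2_swap F x y : continuous2 F y x -> continuous2 (fun x y => F y x) x y.
Proof.
  exact (continuous_comp_2 (fun p : R * R => snd p) (fun p : R * R => fst p) F (x, y)
    (continuous_snd x y) (continuous_fst x y)).
Qed.

Lemma continuous2_slice F x y : continuous2 F x y -> continuous (fun y => F x y) y.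
Proof.
  exact (continuous_comp_2 (fun _ : R => x) (fun y : R => y) F y
    (continuous_const _ _) (continuous_id _)).
Qed.

Lemma continuous2_slice_fst F x y : continuous2 F x y -> continuous (fun x => F x y) x.
Proof. intros HF. exact (continuous2_slice (fun y x => F x y) y x (continuous2_swap F y x HF)). Qed.

Lemma continuous2_2d_pt F x y : continuous2 F x y -> continuity_2d_pt F x y.
Proof. apply continuity_2d_pt_filterlim. Qed.

Ltac continuous2_rules := repeat match goal with
  | |- continuous2 (fun x y => @?F x y ^ ?n) _ _ => apply (continuous2_pow F n)
  | |- continuous2 (fun x y => @?F x y + @?G x y) _ _ => apply (continuous2_plus F G)
  | |- continuous2 (fun x y => @?F x y - @?G x y) _ _ => apply (continuous2_minus F G)
  | |- continuous2 (fun x y => @?F x y * @?G x y) _ _ => apply (continuous2_mult F G)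
  | |- continuous2 (fun x y => - @?F x y) _ _ => apply (continuous2_opp F)
  | |- continuous2 (fun x y => cos (@?F x y)) _ _ => apply (continuous2_cos F)
  | |- continuous2 (fun x y => sin (@?F x y)) _ _ => apply (continuous2_sin F)
  | |- continuous2 (fun x y => x) _ _ => apply continuous2_fst
  | |- continuous2 (fun x y => y) _ _ => apply continuous2_snd
  | |- continuous2 (fun x y => ?c) _ _ => apply (continuous2_const c)
  | H : forall x y, continuous2 ?F x y |- continuous2 ?F _ _ => apply H
  | H : forall x y, continuous2 ?F x y |- continuous2 (fun x y => ?F x y) _ _ => apply H
  | H : forall x y, continuous2 ?F x y |- continuous2 (fun x y => ?F (@?P x y) (@?Q x y)) _ _ =>
      apply (continuous2_comp F P Q); [apply H | |]
  end.

(* Coquelicot states these rules with the generic [plus], [mult], [zero] and [one] of a normed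
   module; the real instances below are what [apply] and [ring] can work with. *)
Lemma is_derive_val (f : R -> R) (x l l' : R) : is_derive f x l -> l = l' -> is_derive f x l'.
Proof. intros H <-; exact H. Qed.

Lemma is_derive_Rconst (c x : R) : is_derive (fun _ => c) x 0.
Proof. exact (is_derive_const c x). Qed.

Lemma is_derive_Rid (x : R) : is_derive (fun t => t) x 1.
Proof. exact (is_derive_id x). Qed.

Lemma is_derive_Rplus (f g : R -> R) (x a b : R) :
  is_derive f x a -> is_derive g x b -> is_derive (fun t => f t + g t) x (a + b).
Proof. exact (is_derive_plus f g x a b). Qed.

Lemma is_derive_Rminus (f g : R -> R) (x a b : R) :
  is_derive f x a -> is_derive g x b -> is_derive (fun t => f t - g t) x (a - b).
Proof. exact (is_derive_minus f g x a b). Qed.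

Lemma is_derive_Rmult (f g : R -> R) (x a b : R) : is_derive f x a -> is_derive g x b ->
  is_derive (fun t => f t * g t) x (a * g x + f x * b).
Proof. intros H1 H2. exact (is_derive_mult f g x a b H1 H2 Rmult_comm). Qed.

Lemma is_derive_Ropp (f : R -> R) (x a : R) : is_derive f x a -> is_derive (fun t => - f t) x (- a).
Proof. exact (is_derive_opp f x a). Qed.

Lemma is_derive_Rcos (f : R -> R) (x a : R) :
  is_derive f x a -> is_derive (fun t => cos (f t)) x (- sin (f x) * a).
Proof.
  intros H. eapply is_derive_val.
  - exact (is_derive_comp cos f x _ a (is_derive_cos (f x)) H).
  - change (a * - sin (f x) = - sin (f x) * a). ring.
Qed.

Lemma is_derive_Rsin (f : R -> R) (x a : R) :
  is_derive f x a -> is_derive (fun t => sin (f t)) x (cos (f x) * a).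
Proof.
  intros H. eapply is_derive_val.
  - exact (is_derive_comp sin f x _ a (is_derive_sin (f x)) H).
  - change (a * cos (f x) = cos (f x) * a). ring.
Qed.

Lemma is_derive_Rpow_id k (x : R) : is_derive (fun r => r ^ k) x (INR k * x ^ pred k).
Proof.
  eapply is_derive_val; [exact (is_derive_pow (fun r => r) k x 1 (is_derive_id x)) |].
  now rewrite Rmult_1_r.
Qed.

Lemma is_derive_continuity_pt (f : R -> R) x l : is_derive f x l -> continuity_pt f x.
Proof.
  intros H. apply continuity_pt_filterlim.
  exact (ex_derive_continuous f x (ex_intro _ l H)).
Qed.

Ltac is_derive_rules := repeat match goal with
  | |- is_derive (fun _ => ?c) _ _ => apply (is_derive_Rconst c)
  | |- is_derive (fun t => t) _ _ => apply is_derive_Rid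
  | |- is_derive (fun t => @?f t + @?g t) _ _ => apply (is_derive_Rplus f g)
  | |- is_derive (fun t => @?f t - @?g t) _ _ => apply (is_derive_Rminus f g)
  | |- is_derive (fun t => @?f t * @?g t) _ _ => apply (is_derive_Rmult f g)
  | |- is_derive (fun t => - @?f t) _ _ => apply (is_derive_Ropp f)
  | |- is_derive (fun t => cos (@?f t)) _ _ => apply (is_derive_Rcos f)
  | |- is_derive (fun t => sin (@?f t)) _ _ => apply (is_derive_Rsin f)
  end.

Ltac ex_derive_rules := repeat match goal with
  | |- ex_derive (fun t => @?f t / @?g t) _ => apply (ex_derive_div f g)
  | |- ex_derive (fun t => @?f t + @?g t) _ => apply (ex_derive_plus f g)
  | |- ex_derive (fun t => @?f t * @?g t) _ => apply (ex_derive_mult f g)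
  | |- ex_derive (fun t => @?f t ^ ?n) _ => apply (ex_derive_pow f n)
  end.

Section C1Functions.

Variable g : R -> R -> R.
Hypothesis Hg : C1 g.

Lemma C1_ex_derive_x x y : ex_derive (fun t => g t y) x.
Proof. apply (Hg x y). Qed.
Lemma C1_ex_derive_y x y : ex_derive (fun t => g x t) y.
Proof. apply (Hg x y). Qed.
Lemma C1_continuous x y : continuous2 g x y.
Proof. apply (Hg x y). Qed.
Lemma C1_continuous_px x y : continuous2 (px g) x y.
Proof. apply (Hg x y). Qed.
Lemma C1_continuous_py x y : continuous2 (py g) x y.
Proof. apply (Hg x y). Qed.
Lemma C1_is_derive_x x y : is_derive (fun t => g t y) x (px g x y).
Proof. exact (Derive_correct _ _ (C1_ex_derive_x x y)). Qed.
Lemma C1_is_derive_y x y : is_derive (fun t => g x t) y (py g x y).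
Proof. exact (Derive_correct _ _ (C1_ex_derive_y x y)). Qed.

Lemma C1_differentiable x y : differentiable_pt_lim g x y (px g x y) (py g x y).
Proof.
  apply filterdiff_differentiable_pt_lim.
  assert (Hx : forall u : R * R,
    is_derive (fun z : R_AbsRing => g z (snd u)) (fst u) (px g (fst u) (snd u)))
    by (intros [u v]; exact (C1_is_derive_x u v)).
  exact (filterdiff_ext_lin _ _ _ (is_derive_filterdiff g x y (px g) (py g x y)
     (filter_forall _ Hx) (C1_is_derive_y x y) (C1_continuous_px x y)) (fun _ => eq_refl)).
Qed.

Lemma is_derive_comp_C1 (p1 p2 : R -> R) t d1 d2 :
  is_derive p1 t d1 -> is_derive p2 t d2 ->
  is_derive (fun t => g (p1 t) (p2 t)) t (px g (p1 t) (p2 t) * d1 + py g (p1 t) (p2 t) * d2).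
Proof.
  intros H1 H2. apply is_derive_Reals, derivable_pt_lim_comp_2d.
  - exact (C1_differentiable _ _).
  - exact (proj1 (is_derive_Reals _ _ _) H1).
  - exact (proj1 (is_derive_Reals _ _ _) H2).
Qed.

End C1Functions.

Section HarmonicR.

Variable u : R -> R -> R.
Hypothesis Hu : harmonic_R u.

Lemma harmonic_R_C1 : C1 u.
Proof. apply Hu. Qed.
Lemma harmonic_R_C1_px : C1 (px u).
Proof. apply Hu. Qed.
Lemma harmonic_R_C1_py : C1 (py u).
Proof. apply Hu. Qed.
Lemma harmonic_R_laplace x y : px (px u) x y + py (py u) x y = 0.
Proof. apply Hu. Qed.

End HarmonicR.

Ltac harmonic_continuity Hu :=
  let u := match type of Hu with harmonic_R ?u => u end in
  pose proof (C1_continuous _ (harmonic_R_C1 u Hu));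
  pose proof (C1_continuous_px _ (harmonic_R_C1 u Hu));
  pose proof (C1_continuous_py _ (harmonic_R_C1 u Hu));
  pose proof (C1_continuous_px _ (harmonic_R_C1_px u Hu));
  pose proof (C1_continuous_py _ (harmonic_R_C1_px u Hu));
  pose proof (C1_continuous_px _ (harmonic_R_C1_py u Hu));
  pose proof (C1_continuous_py _ (harmonic_R_C1_py u Hu)).

(** * Polar coordinates and cosine coefficients *)

(* The phase [ph] lets cosine coefficients in [t] also capture the sine ones. *)
Definition polar (g : R -> R -> R) (a b ph r t : R) : R :=
  g (a + r * cos (t + ph)) (b + r * sin (t + ph)).

Definition polar_dr (g : R -> R -> R) (a b ph r t : R) : R :=
  polar (px g) a b ph r t * cos (t + ph) + polar (py g) a b ph r t * sin (t + ph).

Definition polar_dt (g : R -> R -> R) (a b ph r t : R) : R :=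
  r * (- polar (px g) a b ph r t * sin (t + ph) + polar (py g) a b ph r t * cos (t + ph)).

Definition polar_drr (g : R -> R -> R) (a b ph r t : R) : R :=
  cos (t + ph) * polar_dr (px g) a b ph r t + sin (t + ph) * polar_dr (py g) a b ph r t.

Definition polar_dtt (g : R -> R -> R) (a b ph r t : R) : R :=
  r * (- polar_dt (px g) a b ph r t * sin (t + ph) - polar (px g) a b ph r t * cos (t + ph)
       + polar_dt (py g) a b ph r t * cos (t + ph) - polar (py g) a b ph r t * sin (t + ph)).

Section Polar.

Variables (a b ph : R).

Lemma continuous2_polar g :
  (forall x y, continuous2 g x y) -> forall r t, continuous2 (polar g a b ph) r t.
Proof.
  intros Hg r t.
  apply (continuous2_comp g (fun r t => a + r * cos (t + ph)) (fun r t => b + r * sin (t + ph)));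
    [apply Hg | continuous2_rules ..].
Qed.

Lemma is_derive_polar_r g r t : C1 g ->
  is_derive (fun r => polar g a b ph r t) r (polar_dr g a b ph r t).
Proof.
  intros Hg.
  assert (Hx : is_derive (fun r => a + r * cos (t + ph)) r (cos (t + ph)))
    by (eapply is_derive_val; [is_derive_rules | cbv beta; ring]).
  assert (Hy : is_derive (fun r => b + r * sin (t + ph)) r (sin (t + ph)))
    by (eapply is_derive_val; [is_derive_rules | cbv beta; ring]).
  exact (is_derive_comp_C1 g Hg _ _ r _ _ Hx Hy).
Qed.

Lemma is_derive_polar_t g r t : C1 g ->
  is_derive (fun t => polar g a b ph r t) t (polar_dt g a b ph r t).
Proof.
  intros Hg.
  assert (Hx : is_derive (fun t => a + r * cos (t + ph)) t (- r * sin (t + ph)))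
    by (eapply is_derive_val; [is_derive_rules | cbv beta; ring]).
  assert (Hy : is_derive (fun t => b + r * sin (t + ph)) t (r * cos (t + ph)))
    by (eapply is_derive_val; [is_derive_rules | cbv beta; ring]).
  eapply is_derive_val; [exact (is_derive_comp_C1 g Hg _ _ t _ _ Hx Hy) |].
  unfold polar_dt, polar; ring.
Qed.

Lemma is_derive_polar_dr_r g r t : C1 (px g) -> C1 (py g) ->
  is_derive (fun r => polar_dr g a b ph r t) r (polar_drr g a b ph r t).
Proof.
  intros Hx Hy. eapply is_derive_val.
  - apply is_derive_Rplus; apply is_derive_Rmult;
      [apply is_derive_polar_r; exact Hx | apply is_derive_Rconst
      | apply is_derive_polar_r; exact Hy | apply is_derive_Rconst].
  - unfold polar_drr; cbv beta; ring.
Qed.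

Lemma is_derive_polar_dt_t g r t : C1 (px g) -> C1 (py g) ->
  is_derive (fun t => polar_dt g a b ph r t) t (polar_dtt g a b ph r t).
Proof.
  intros Hx Hy.
  assert (Hph : is_derive (fun t => t + ph) t 1)
    by (eapply is_derive_val; [is_derive_rules | cbv beta; ring]).
  eapply is_derive_val.
  - apply is_derive_Rmult; [apply is_derive_Rconst |].
    apply is_derive_Rplus; apply is_derive_Rmult.
    + apply is_derive_Ropp, is_derive_polar_t; exact Hx.
    + apply is_derive_Rsin; exact Hph.
    + apply is_derive_polar_t; exact Hy.
    + apply is_derive_Rcos; exact Hph.
  - unfold polar_dtt, polar_dt; cbv beta; ring.
Qed.

(* The Laplacian in polar coordinates: [r^2 u_rr + r u_r + u_tt = r^2 (u_xx + u_yy)]. *)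
Lemma polar_laplacian u r t : harmonic_R u ->
  r ^ 2 * polar_drr u a b ph r t + r * polar_dr u a b ph r t + polar_dtt u a b ph r t = 0.
Proof.
  intros Hu.
  pose proof (harmonic_R_laplace u Hu (a + r * cos (t + ph)) (b + r * sin (t + ph))) as Hlap.
  unfold polar_drr, polar_dtt, polar_dr, polar_dt, polar.
  transitivity (r ^ 2 * (px (px u) (a + r * cos (t + ph)) (b + r * sin (t + ph))
      + py (py u) (a + r * cos (t + ph)) (b + r * sin (t + ph)))
      * (cos (t + ph) ^ 2 + sin (t + ph) ^ 2)); [ring | rewrite Hlap; ring].
Qed.

Lemma polar_periodic g r : polar g a b ph r (2 * PI) = polar g a b ph r 0.
Proof.
  unfold polar. replace (2 * PI + ph) with (ph + 2 * INR 1 * PI) by (simpl; ring).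
  now rewrite cos_period, sin_period, Rplus_0_l.
Qed.

Lemma polar_dt_periodic g r : polar_dt g a b ph r (2 * PI) = polar_dt g a b ph r 0.
Proof.
  unfold polar_dt. rewrite !polar_periodic.
  replace (2 * PI + ph) with (ph + 2 * INR 1 * PI) by (simpl; ring).
  now rewrite cos_period, sin_period, Rplus_0_l.
Qed.

End Polar.

Ltac polar_continuity Hu :=
  harmonic_continuity Hu; unfold polar_drr, polar_dtt, polar_dr, polar_dt;
  continuous2_rules; try (apply continuous2_polar; assumption).

Ltac polar_slice_continuity Hu :=
  match goal with |- continuous (?F ?r) ?t => apply (continuous2_slice F r t); polar_continuity Hu end.

Lemma RInt_ext_all (f g : R -> R) a b : (forall x, f x = g x) -> RInt f a b = RInt g a b.
Proof. intros E. apply RInt_ext. intros x _. apply E. Qed.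

Lemma RInt_Rplus (f g : R -> R) a b : ex_RInt f a b -> ex_RInt g a b ->
  RInt (fun x => f x + g x) a b = RInt f a b + RInt g a b.
Proof. exact (RInt_plus f g a b). Qed.

Lemma RInt_Rscal (f : R -> R) a b c : ex_RInt f a b -> RInt (fun x => c * f x) a b = c * RInt f a b.
Proof. exact (RInt_scal f a b c). Qed.

Lemma ex_RInt_Rscal (f : R -> R) a b c : ex_RInt f a b -> ex_RInt (fun x => c * f x) a b.
Proof. exact (ex_RInt_scal f a b c). Qed.

Lemma ex_RInt_Rplus (f g : R -> R) a b :
  ex_RInt f a b -> ex_RInt g a b -> ex_RInt (fun x => f x + g x) a b.
Proof. exact (ex_RInt_plus f g a b). Qed.

Lemma RInt_ge_piecewise (f : R -> R) lo a1 a2 hi B c :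
  lo <= a1 <= a2 -> a2 <= hi -> 0 <= B -> ex_RInt f lo hi ->
  (forall x, lo < x < hi -> - B <= f x) -> (forall x, a1 < x < a2 -> c <= f x) ->
  (a2 - a1) * c - (hi - lo) * B <= RInt f lo hi.
Proof.
  intros Ha Hb HB Hf Hlow Hmid.
  pose (V := R_CompleteNormedModule).
  assert (H1 : ex_RInt f lo a1) by (apply (ex_RInt_Chasles_1 (V := V) _ _ _ hi); [lra | exact Hf]).
  assert (H23 : ex_RInt f a1 hi) by (apply (ex_RInt_Chasles_2 (V := V) _ lo); [lra | exact Hf]).
  assert (H2 : ex_RInt f a1 a2) by (apply (ex_RInt_Chasles_1 (V := V) _ _ _ hi); [lra | exact H23]).
  assert (H3 : ex_RInt f a2 hi) by (apply (ex_RInt_Chasles_2 (V := V) _ a1); [lra | exact H23]).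
  assert (Hconst : forall x y c, RInt (fun _ => c) x y = (y - x) * c)
    by (intros; rewrite RInt_const; reflexivity).
  assert (Hex : forall x y c, ex_RInt (fun _ : R => c) x y)
    by (intros; apply (ex_RInt_const (V := R_CompleteNormedModule))).
  assert (I1 := RInt_le (fun _ => - B) f lo a1 ltac:(lra) (Hex _ _ _) H1 ltac:(intros; apply Hlow; lra)).
  assert (I2 := RInt_le (fun _ => c) f a1 a2 ltac:(lra) (Hex _ _ _) H2 ltac:(intros; apply Hmid; lra)).
  assert (I3 := RInt_le (fun _ => - B) f a2 hi ltac:(lra) (Hex _ _ _) H3 ltac:(intros; apply Hlow; lra)).
  rewrite Hconst in I1, I2, I3.
  rewrite <- (RInt_Chasles f lo a1 hi H1 H23), <- (RInt_Chasles f a1 a2 hi H2 H3).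
  repeat change (plus ?x ?y) with (x + y).
  assert (0 <= B * (a2 - a1)) by (apply Rmult_le_pos; lra). nra.
Qed.

Lemma ex_RInt_continuous2 (F : R -> R -> R) r a b :
  (forall t, continuous2 F r t) -> ex_RInt (fun t => F r t) a b.
Proof.
  intros HF. apply (ex_RInt_continuous (V := R_CompleteNormedModule)).
  intros t _. exact (continuous2_slice F r t (HF t)).
Qed.

Lemma is_derive_RInt_continuous2 (F dF : R -> R -> R) a b r :
  (forall r t, is_derive (fun r => F r t) r (dF r t)) ->
  (forall r t, continuous2 F r t) -> (forall r t, continuous2 dF r t) ->
  is_derive (fun r => RInt (fun t => F r t) a b) r (RInt (fun t => dF r t) a b).
Proof.
  intros Hd HF HdF.
  assert (HD : forall r t, Derive (fun z => F z t) r = dF r t)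
    by (intros; exact (is_derive_unique _ _ _ (Hd _ _))).
  rewrite <- (RInt_ext (fun t => Derive (fun u => F u t) r)) by (intros; apply HD).
  apply (is_derive_RInt_param F a b r).
  - apply filter_forall. intros r' t _. exists (dF r' t). apply Hd.
  - intros t _. apply (continuity_2d_pt_ext dF); [intros; symmetry; apply HD |].
    apply continuous2_2d_pt, HdF.
  - apply filter_forall. intros r'. apply ex_RInt_continuous2. intros; apply HF.
Qed.

(* Unnormalised: the usual Fourier coefficient is [cos_coef h k / PI] for [k > 0]. *)
Definition cos_coef (h : R -> R) (k : nat) : R :=
  RInt (fun t => h t * cos (INR k * t)) 0 (2 * PI).

Lemma continuous_cos_mul c x : continuous (fun s => cos (c * s)) x.
Proof.
  apply (continuous_comp (fun s => c * s) cos); [| apply continuous_cos].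
  exact (continuous_mult (fun _ => c) (fun s => s) x (continuous_const _ _) (continuous_id _)).
Qed.

Lemma ex_RInt_cos_coef (h : R -> R) k :
  (forall t, 0 <= t <= 2 * PI -> continuous h t) ->
  ex_RInt (fun t => h t * cos (INR k * t)) 0 (2 * PI).
Proof.
  intros Hh. apply (ex_RInt_continuous (V := R_CompleteNormedModule)). intros t Ht.
  rewrite Rmin_left, Rmax_right in Ht by (pose proof PI_RGT_0; lra).
  exact (continuous_mult h _ t (Hh t Ht) (continuous_cos_mul _ t)).
Qed.

Lemma cos_coef_ext (h1 h2 : R -> R) k : (forall t, h1 t = h2 t) -> cos_coef h1 k = cos_coef h2 k.
Proof. intros E. apply RInt_ext_all. intros t. now rewrite E. Qed.

Lemma cos_coef_lincomb (h1 h2 : R -> R) c1 c2 k :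
  (forall t, 0 <= t <= 2 * PI -> continuous h1 t) ->
  (forall t, 0 <= t <= 2 * PI -> continuous h2 t) ->
  cos_coef (fun t => c1 * h1 t + c2 * h2 t) k = c1 * cos_coef h1 k + c2 * cos_coef h2 k.
Proof.
  intros H1 H2. unfold cos_coef.
  rewrite (RInt_ext_all _ (fun t => c1 * (h1 t * cos (INR k * t)) + c2 * (h2 t * cos (INR k * t))))
    by (intros; ring).
  rewrite RInt_Rplus.
  - now rewrite !RInt_Rscal by (apply ex_RInt_cos_coef; assumption).
  - apply ex_RInt_Rscal, ex_RInt_cos_coef, H1.
  - apply ex_RInt_Rscal, ex_RInt_cos_coef, H2.
Qed.

Lemma sin_nat_mult_2PI k : sin (INR k * (2 * PI)) = 0.
Proof. replace (INR k * (2 * PI)) with (0 + 2 * INR k * PI) by ring. now rewrite sin_period, sin_0. Qed.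

Lemma cos_nat_mult_2PI k : cos (INR k * (2 * PI)) = 1.
Proof. replace (INR k * (2 * PI)) with (0 + 2 * INR k * PI) by ring. now rewrite cos_period, cos_0. Qed.

Lemma cos_coef_one k : cos_coef (fun _ => 1) k = match k with O => 2 * PI | S _ => 0 end.
Proof.
  unfold cos_coef. destruct k as [|m].
  - rewrite (RInt_ext_all _ (fun _ => 1)) by (intros; simpl; now rewrite Rmult_0_l, cos_0, Rmult_1_l).
    rewrite RInt_const. change (scal ?x ?y) with (x * y). ring.
  - assert (Hm : INR (S m) <> 0) by (apply not_0_INR; lia).
    apply is_RInt_unique.
    replace 0 with (/ INR (S m) * sin (INR (S m) * (2 * PI)) - / INR (S m) * sin (INR (S m) * 0))
      at 2 by (rewrite sin_nat_mult_2PI, !Rmult_0_r, sin_0; ring).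
    apply (is_RInt_derive (fun s => / INR (S m) * sin (INR (S m) * s))).
    + intros x _. eapply is_derive_val; [is_derive_rules | cbv beta; field; exact Hm].
    + intros x _. apply (continuous_mult (fun _ => 1)); [apply continuous_const | apply continuous_cos_mul].
Qed.

Lemma cos_coef_const c k : cos_coef (fun _ => c) k = c * cos_coef (fun _ => 1) k.
Proof.
  rewrite (cos_coef_ext _ (fun _ => c * 1 + 0 * 1)) by (intros; ring).
  rewrite cos_coef_lincomb by (intros; apply continuous_const). ring.
Qed.

Lemma derive_zero_eq (f : R -> R) a b :
  (forall x, Rmin a b < x < Rmax a b -> is_derive f x 0) ->
  (forall x, Rmin a b <= x <= Rmax a b -> continuity_pt f x) -> f b = f a.
Proof. intros Hd Hc. destruct (MVT_gen f a b (fun _ => 0) Hd Hc) as [c [_ E]]. lra. Qed.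

Lemma nat_mult_pow_pred k (r : R) : INR k * r ^ pred k * r = INR k * r ^ k.
Proof. destruct k as [|k]; simpl; ring. Qed.

Section PolarCoefficients.

Variables (u : R -> R -> R) (a b ph : R).
Hypothesis Hu : harmonic_R u.

Lemma is_derive_cos_coef_polar k r :
  is_derive (fun r => cos_coef (polar u a b ph r) k) r (cos_coef (polar_dr u a b ph r) k).
Proof.
  apply (is_derive_RInt_continuous2 (fun r t => polar u a b ph r t * cos (INR k * t))
    (fun r t => polar_dr u a b ph r t * cos (INR k * t))); intros r' t; [| polar_continuity Hu ..].
  eapply is_derive_val; [apply is_derive_Rmult |].
  - apply is_derive_polar_r, harmonic_R_C1, Hu.
  - apply is_derive_Rconst.
  - cbv beta; ring.
Qed.

Lemma is_derive_cos_coef_polar_dr k r :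
  is_derive (fun r => cos_coef (polar_dr u a b ph r) k) r (cos_coef (polar_drr u a b ph r) k).
Proof.
  apply (is_derive_RInt_continuous2 (fun r t => polar_dr u a b ph r t * cos (INR k * t))
    (fun r t => polar_drr u a b ph r t * cos (INR k * t))); intros r' t; [| polar_continuity Hu ..].
  eapply is_derive_val; [apply is_derive_Rmult |].
  - apply is_derive_polar_dr_r; [apply harmonic_R_C1_px | apply harmonic_R_C1_py]; exact Hu.
  - apply is_derive_Rconst.
  - cbv beta; ring.
Qed.

(* Two integrations by parts over a full period, where the boundary terms cancel. *)
Lemma cos_coef_polar_dtt k r :
  cos_coef (polar_dtt u a b ph r) k = - INR k ^ 2 * cos_coef (polar u a b ph r) k.
Proof.
  assert (Hparts : cos_coef (fun t => 1 * polar_dtt u a b ph r t + INR k ^ 2 * polar u a b ph r t) k = 0).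
  { apply is_RInt_unique.
    set (F := fun t => polar_dt u a b ph r t * cos (INR k * t)
                       + INR k * (polar u a b ph r t * sin (INR k * t))).
    replace 0 with (F (2 * PI) - F 0) at 2
      by (unfold F; rewrite polar_dt_periodic, polar_periodic, cos_nat_mult_2PI, sin_nat_mult_2PI,
                           !Rmult_0_r, cos_0, sin_0; ring).
    apply (is_RInt_derive F).
    - intros t _. unfold F. eapply is_derive_val.
      + apply is_derive_Rplus; [apply is_derive_Rmult | apply is_derive_Rmult; [| apply is_derive_Rmult]].
        * apply is_derive_polar_dt_t; [apply harmonic_R_C1_px | apply harmonic_R_C1_py]; exact Hu.
        * is_derive_rules.
        * is_derive_rules.
        * apply is_derive_polar_t, harmonic_R_C1, Hu.
        * is_derive_rules.
      + cbv beta. ring.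
    - intros t _.
      apply (continuous_mult (fun t => 1 * polar_dtt u a b ph r t + INR k ^ 2 * polar u a b ph r t));
        [| apply continuous_cos_mul].
      apply (continuous_plus (fun t => 1 * polar_dtt u a b ph r t)).
      + apply (continuous_mult (fun _ => 1) (polar_dtt u a b ph r));
          [apply continuous_const | polar_slice_continuity Hu].
      + apply (continuous_mult (fun _ => INR k ^ 2) (polar u a b ph r));
          [apply continuous_const | polar_slice_continuity Hu]. }
  rewrite cos_coef_lincomb in Hparts by (intros t _; polar_slice_continuity Hu).
  lra.
Qed.

(* Averaging [polar_laplacian] against [cos (k t)] gives Euler's equation [r^2 A'' + r A' = k^2 A]
   for the [k]-th coefficient [A] of [u] on the circle of radius [r]. *)
Lemma cos_coef_polar_euler k r :
  r ^ 2 * cos_coef (polar_drr u a b ph r) k + r * cos_coef (polar_dr u a b ph r) k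
  = INR k ^ 2 * cos_coef (polar u a b ph r) k.
Proof.
  rewrite <- cos_coef_lincomb by (intros t _; polar_slice_continuity Hu).
  rewrite (cos_coef_ext _ (fun t => -1 * polar_dtt u a b ph r t + 0 * polar_dtt u a b ph r t))
    by (intros t; pose proof (polar_laplacian a b ph u r t Hu); lra).
  rewrite cos_coef_lincomb, cos_coef_polar_dtt by (intros t _; polar_slice_continuity Hu).
  ring.
Qed.

(* [r^k (r A' - k A)] has derivative [r^(k-1) (r^2 A'' + r A' - k^2 A) = 0] and vanishes at [0]:
   regularity at the centre rules out the solution [r^-k] of Euler's equation. *)
Lemma cos_coef_polar_homogeneous k r : 0 < r ->
  r * cos_coef (polar_dr u a b ph r) k = INR k * cos_coef (polar u a b ph r) k.
Proof.
  intros Hr.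
  set (A := fun r => cos_coef (polar u a b ph r) k).
  set (D := fun r => cos_coef (polar_dr u a b ph r) k).
  set (E := fun r => cos_coef (polar_drr u a b ph r) k).
  set (Z := fun r => r ^ k * (r * D r - INR k * A r)).
  assert (HdZ : forall s : R, is_derive Z s
    (INR k * s ^ pred k * (s * D s - INR k * A s) + s ^ k * (1 * D s + s * E s - INR k * D s))).
  { intros s. unfold Z. eapply is_derive_val.
    - apply is_derive_Rmult; [apply is_derive_Rpow_id |].
      apply is_derive_Rminus; apply is_derive_Rmult;
        [apply is_derive_Rid | apply is_derive_cos_coef_polar_dr
        | apply is_derive_Rconst | apply is_derive_cos_coef_polar].
    - unfold A, D, E; cbv beta; ring. }
  assert (HZ : Z r = Z 0).
  { apply derive_zero_eq.
    - intros s Hs. rewrite Rmin_left, Rmax_right in Hs by lra.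
      eapply is_derive_val; [apply HdZ |].
      apply (Rmult_eq_reg_r s); [| lra].
      pose proof (cos_coef_polar_euler k s) as Heuler. fold (A s) (D s) (E s) in Heuler.
      transitivity (INR k * s ^ pred k * s * (s * D s - INR k * A s)
                    + s ^ k * s * (1 * D s + s * E s - INR k * D s)); [ring |].
      rewrite nat_mult_pow_pred.
      transitivity (s ^ k * (s ^ 2 * E s + s * D s - INR k ^ 2 * A s)); [ring | rewrite Heuler; ring].
    - intros s _. apply (is_derive_continuity_pt _ _ _ (HdZ s)). }
  assert (HZ0 : Z 0 = 0).
  { pose proof (nat_mult_pow_pred k 0) as H0. rewrite Rmult_0_r in H0.
    unfold Z. transitivity (- (INR k * 0 ^ k) * A 0); [ring | rewrite <- H0; ring]. }
  assert (Hrk : 0 < r ^ k) by (apply pow_lt; exact Hr).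
  rewrite HZ0 in HZ; unfold Z in HZ.
  apply Rmult_integral in HZ as [HZ | HZ]; [lra | unfold A, D in HZ; lra].
Qed.

Lemma cos_coef_polar_pow k r : 0 < r ->
  cos_coef (polar u a b ph r) k = cos_coef (polar u a b ph 1) k * r ^ k.
Proof.
  intros Hr.
  set (Q := fun r => cos_coef (polar u a b ph r) k / r ^ k).
  assert (HQ : forall s, 0 < s -> is_derive Q s 0).
  { intros s Hs. assert (Hsk : s ^ k <> 0) by (apply pow_nonzero; lra).
    eapply is_derive_val.
    - apply is_derive_div; [apply is_derive_cos_coef_polar | apply is_derive_Rpow_id | exact Hsk].
    - cbv beta. unfold Rdiv.
      replace (cos_coef (polar_dr u a b ph s) k * s ^ k
               - cos_coef (polar u a b ph s) k * (INR k * s ^ pred k)) with 0; [ring |].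
      apply (Rmult_eq_reg_l s); [| lra].
      transitivity (s ^ k * (s * cos_coef (polar_dr u a b ph s) k)
                    - cos_coef (polar u a b ph s) k * (INR k * s ^ pred k * s)); [| ring].
      rewrite cos_coef_polar_homogeneous, nat_mult_pow_pred by exact Hs. ring. }
  assert (HQr : Q r = Q 1).
  { apply derive_zero_eq; intros s Hs.
    - apply HQ. pose proof (Rmin_glb_lt 1 r 0 Rlt_0_1 Hr). lra.
    - apply (is_derive_continuity_pt _ _ _ (HQ s ltac:(pose proof (Rmin_glb_lt 1 r 0 Rlt_0_1 Hr); lra))). }
  unfold Q in HQr. rewrite pow1, Rdiv_1_r in HQr.
  rewrite <- HQr. field. apply pow_nonzero; lra.
Qed.

Lemma cos_coef_polar_0 r : 0 < r -> cos_coef (polar u a b ph r) 0 = 2 * PI * u a b.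
Proof.
  intros Hr.
  assert (Hd : forall s, is_derive (fun r => cos_coef (polar u a b ph r) 0) s
                                   (cos_coef (polar_dr u a b ph s) 0)) by apply is_derive_cos_coef_polar.
  rewrite (derive_zero_eq (fun r => cos_coef (polar u a b ph r) 0) 0 r).
  - rewrite (cos_coef_ext _ (fun _ => u a b)) by (intros; unfold polar; now rewrite !Rmult_0_l, !Rplus_0_r).
    rewrite cos_coef_const, cos_coef_one. ring.
  - intros s Hs. rewrite Rmin_left, Rmax_right in Hs by lra.
    eapply is_derive_val; [apply Hd |].
    pose proof (cos_coef_polar_homogeneous 0 s ltac:(lra)) as H0. simpl INR in H0.
    apply (Rmult_eq_reg_l s); lra.
  - intros s _. exact (is_derive_continuity_pt _ _ _ (Hd s)).
Qed.

End PolarCoefficients.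

(** * A kernel concentrating at [PI] *)

(* Equal to [1] at [PI] and smaller elsewhere on [[0, 2 PI]], so its powers concentrate at [PI]. *)
Definition bump (s : R) : R := (1 - cos s) / 2.

Lemma continuous_bump s : continuous bump s.
Proof.
  apply (continuous_mult (fun s => 1 - cos s) (fun _ => / 2)); [| apply continuous_const].
  exact (continuous_minus (fun _ => 1) cos s (continuous_const _ _) (continuous_cos s)).
Qed.

Lemma continuous_mult_bump_pow (g : R -> R) n s :
  continuous g s -> continuous (fun s => g s * bump s ^ n) s.
Proof.
  intros Hg. apply (continuous_mult g (fun s => bump s ^ n)); [exact Hg |].
  induction n as [|n IH]; [apply continuous_const |].
  exact (continuous_mult bump (fun s => bump s ^ n) s (continuous_bump s) IH).
Qed.

Lemma bump_ge_0 s : 0 <= bump s.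
Proof. unfold bump. pose proof (COS_bound s). lra. Qed.

Lemma bump_le_far s d : 0 <= s <= 2 * PI -> 0 <= d <= PI -> d <= Rabs (s - PI) ->
  bump s <= (1 + cos d) / 2.
Proof.
  intros Hs Hd Hsd. unfold bump.
  destruct (Rle_dec s PI).
  - rewrite Rabs_left1 in Hsd by lra.
    pose proof (cos_decr_1 s (PI - d) ltac:(lra) ltac:(lra) ltac:(lra) ltac:(lra) ltac:(lra)).
    rewrite Rtrigo_facts.cos_pi_minus in *. lra.
  - rewrite Rabs_right in Hsd by lra.
    pose proof (cos_incr_1 (d + PI) s ltac:(lra) ltac:(lra) ltac:(lra) ltac:(lra) ltac:(lra)).
    rewrite neg_cos in *. lra.
Qed.

Lemma bump_ge_near s d : 0 <= d <= PI -> Rabs (s - PI) <= d -> (1 + cos d) / 2 <= bump s.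
Proof.
  intros Hd Hsd. unfold bump.
  destruct (Rle_dec s PI).
  - rewrite Rabs_left1 in Hsd by lra.
    pose proof (cos_decr_1 (PI - d) s ltac:(lra) ltac:(lra) ltac:(lra) ltac:(lra) ltac:(lra)).
    rewrite Rtrigo_facts.cos_pi_minus in *. lra.
  - rewrite Rabs_right in Hsd by lra.
    pose proof (cos_incr_1 s (d + PI) ltac:(lra) ltac:(lra) ltac:(lra) ltac:(lra) ltac:(lra)).
    rewrite neg_cos in *. lra.
Qed.

(* [cos s * cos (m s)] is the mean of [cos ((m + 1) s)] and [cos ((m - 1) s)], where [m - 1] may be
   replaced by [1] when [m = 0]. *)
Lemma cos_coef_mul_bump (h : R -> R) m : (forall s, 0 <= s <= 2 * PI -> continuous h s) ->
  cos_coef (fun s => h s * bump s) m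
  = / 2 * cos_coef h m - / 4 * cos_coef h (S m) - / 4 * cos_coef h (match m with O => 1 | S p => p end).
Proof.
  intros Hh. set (m' := match m with O => 1%nat | S p => p end).
  assert (Hprod : forall s, cos s * cos (INR m * s) = (cos (INR (S m) * s) + cos (INR m' * s)) / 2).
  { intros s. unfold m'. destruct m as [|p].
    - simpl. rewrite Rmult_0_l, Rmult_1_l, cos_0. field.
    - replace (INR (S (S p)) * s) with (INR (S p) * s + s) by (rewrite (S_INR (S p)); ring).
      replace (INR p * s) with (INR (S p) * s - s) by (rewrite (S_INR p); ring).
      rewrite cos_plus, cos_minus. field. }
  unfold cos_coef.
  rewrite (RInt_ext_all _ (fun s => / 2 * (h s * cos (INR m * s))
      + (- / 4 * (h s * cos (INR (S m) * s)) + - / 4 * (h s * cos (INR m' * s)))))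
    by (intros s; replace (cos (INR (S m) * s)) with (2 * (cos s * cos (INR m * s)) - cos (INR m' * s))
          by (rewrite Hprod; field); unfold bump; field).
  assert (Hex : forall k, ex_RInt (fun s => h s * cos (INR k * s)) 0 (2 * PI))
    by (intros; apply ex_RInt_cos_coef, Hh).
  assert (HexZ : forall c k, ex_RInt (fun s => c * (h s * cos (INR k * s))) 0 (2 * PI))
    by (intros; apply ex_RInt_Rscal, Hex).
  rewrite (RInt_Rplus _ _ _ _ (HexZ _ _) (ex_RInt_Rplus _ _ _ _ (HexZ _ _) (HexZ _ _))),
    (RInt_Rplus _ _ _ _ (HexZ _ _) (HexZ _ _)), !(RInt_Rscal _ _ _ _ (Hex _)).
  ring.
Qed.

Lemma cos_coef_bump_pow (g : R -> R) : (forall s, 0 <= s <= 2 * PI -> continuous g s) ->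
  (forall m, cos_coef g m = 0) -> forall n m, cos_coef (fun s => g s * bump s ^ n) m = 0.
Proof.
  intros Hg Hm n. induction n as [|n IH]; intros m.
  - rewrite <- (Hm m). apply cos_coef_ext. intros s. simpl. ring.
  - rewrite (cos_coef_ext _ (fun s => (g s * bump s ^ n) * bump s)) by (intros; simpl; ring).
    rewrite cos_coef_mul_bump, !IH by (intros s Hs; apply continuous_mult_bump_pow, Hg, Hs).
    ring.
Qed.

Lemma exists_pow_dominates q q' A B : 0 <= q < q' -> 0 < A -> exists n, B * q ^ n < A * q' ^ n.
Proof.
  intros Hq HA.
  set (rho := q / q').
  assert (Hrho : 0 <= rho < 1).
  { unfold rho. split; [apply Rdiv_le_0_compat; lra |].
    apply (Rmult_lt_reg_r q'); [lra |]. unfold Rdiv. rewrite Rmult_assoc, Rinv_l; lra. }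
  assert (HB : 0 < A / (Rabs B + 1)) by (apply Rdiv_lt_0_compat; [lra | pose proof (Rabs_pos B); lra]).
  destruct (pow_lt_1_zero rho ltac:(rewrite Rabs_right; lra) _ HB) as [n Hn].
  exists n. specialize (Hn n (Nat.le_refl n)).
  rewrite Rabs_right in Hn by (apply Rle_ge, pow_le; lra).
  assert (Hq' : 0 < q' ^ n) by (apply pow_lt; lra).
  assert (Hqn : q ^ n = rho ^ n * q' ^ n) by (unfold rho; rewrite <- Rpow_mult_distr; f_equal; field; lra).
  assert (Hrn : rho ^ n * (Rabs B + 1) < A)
    by (apply (Rmult_lt_reg_r (/ (Rabs B + 1))); [pose proof (Rabs_pos B); apply Rinv_0_lt_compat; lra |];
        rewrite Rmult_assoc, Rinv_r, Rmult_1_r by (pose proof (Rabs_pos B); lra); exact Hn).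
  assert (B * q ^ n <= Rabs B * q ^ n)
    by (apply Rmult_le_compat_r; [apply pow_le; lra | apply Rle_abs]).
  assert (0 <= rho ^ n) by (apply pow_le; lra).
  rewrite Hqn in *. nra.
Qed.

Lemma bump_pow_lower_far (g : R -> R) M d n s : 0 <= s <= 2 * PI -> 0 <= d <= PI ->
  Rabs (g s) <= M -> (d <= Rabs (s - PI) \/ 0 <= g s) ->
  - (M * ((1 + cos d) / 2) ^ n) <= g s * bump s ^ n.
Proof.
  intros Hs Hd HM Hcase. set (q := (1 + cos d) / 2).
  pose proof (pow_le (bump s) n (bump_ge_0 s)).
  assert (0 <= M * q ^ n) by (apply Rmult_le_pos; [pose proof (Rabs_pos (g s)); lra |
                                                   apply pow_le; unfold q; pose proof (COS_bound d); lra]).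
  destruct Hcase as [Hfar | Hg]; [| nra].
  assert (Hb : bump s ^ n <= q ^ n) by (apply pow_incr; split; [apply bump_ge_0 | apply bump_le_far; lra]).
  pose proof (Rle_abs (- g s)) as Hneg. rewrite Rabs_Ropp in Hneg.
  assert (- g s * bump s ^ n <= M * q ^ n)
    by (destruct (Rle_dec 0 (- g s)); [apply Rmult_le_compat; lra | nra]).
  lra.
Qed.

Lemma bump_pow_lower_near (g : R -> R) e d n s : 0 <= d <= PI -> Rabs (s - PI) <= d ->
  0 <= e <= g s -> e * ((1 + cos d) / 2) ^ n <= g s * bump s ^ n.
Proof.
  intros Hd Hs He. pose proof (COS_bound d).
  apply Rmult_le_compat; [lra | apply pow_le; lra | lra |].
  apply pow_incr. split; [lra | apply bump_ge_near; assumption].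
Qed.

Lemma bump_pow_concentration (g : R -> R) : (forall s, 0 <= s <= 2 * PI -> continuous g s) ->
  0 < g PI -> exists n, 0 < RInt (fun s => g s * bump s ^ n) 0 (2 * PI).
Proof.
  intros Hg Hpos. pose proof PI2_1.
  set (eps := g PI / 2).
  assert (Hc : continuity_pt g PI) by (apply continuity_pt_filterlim, Hg; lra).
  destruct (proj1 (continuity_pt_locally g PI) Hc (mkposreal eps ltac:(unfold eps; lra))) as [d0 Hd0].
  set (d := Rmin (d0 / 2) 1).
  assert (Hd : 0 < d <= 1 /\ d < d0).
  { pose proof (cond_pos d0). unfold d. split; [split; [apply Rmin_glb_lt | apply Rmin_r]; lra |].
    apply (Rle_lt_trans _ (d0 / 2)); [apply Rmin_l | lra]. }
  assert (Hnear : forall s, Rabs (s - PI) < d0 -> eps <= g s)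
    by (intros s Hs; specialize (Hd0 s Hs); apply Rabs_def2 in Hd0; unfold eps in *; simpl in Hd0; lra).
  destruct (continuity_ab_maj (fun s => Rabs (g s)) 0 (2 * PI)) as [Mx [HM _]]; [lra | |].
  { intros s Hs. apply continuity_pt_filterlim, continuous_Rabs_comp, Hg, Hs. }
  set (M := Rabs (g Mx)).
  set (q := (1 + cos d) / 2). set (q' := (1 + cos (d / 2)) / 2).
  assert (Hqq : 0 <= q < q').
  { assert (0 < cos d) by (apply cos_gt_0; lra).
    assert (cos d < cos (d / 2)) by (apply cos_decreasing_1; lra). unfold q, q'; lra. }
  assert (HM0 : 0 <= M) by apply Rabs_pos.
  destruct (exists_pow_dominates q q' (d * eps) (2 * PI * M) Hqq ltac:(unfold eps; nra)) as [n Hn].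
  exists n.
  eapply Rlt_le_trans;
    [| apply (RInt_ge_piecewise _ 0 (PI - d / 2) (PI + d / 2) (2 * PI) (M * q ^ n) (eps * q' ^ n))];
    [lra | lra | lra | apply Rmult_le_pos; [exact HM0 | apply pow_le; lra] | | |].
  - apply (ex_RInt_continuous (V := R_CompleteNormedModule)). intros s Hs.
    rewrite Rmin_left, Rmax_right in Hs by lra. apply continuous_mult_bump_pow, Hg, Hs.
  - intros s Hs. apply bump_pow_lower_far; [lra | lra | apply HM; lra |].
    destruct (Rlt_dec (Rabs (s - PI)) d0) as [Hs0 | Hs0]; [right | left]; [| lra].
    pose proof (Hnear s Hs0). unfold eps in *. lra.
  - intros s Hs. apply bump_pow_lower_near; [lra | apply Rabs_le; lra |].
    split; [unfold eps; lra | apply Hnear, Rabs_def1; lra].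
Qed.

Lemma cos_coef_zero_at_PI (g : R -> R) : (forall s, 0 <= s <= 2 * PI -> continuous g s) ->
  (forall m, cos_coef g m = 0) -> g PI = 0.
Proof.
  assert (Hpos : forall g : R -> R, (forall s, 0 <= s <= 2 * PI -> continuous g s) ->
                   (forall m, cos_coef g m = 0) -> ~ 0 < g PI).
  { intros h Hh Hm Hpos. destruct (bump_pow_concentration h Hh Hpos) as [n Hn].
    rewrite <- (RInt_ext_all (fun s => h s * bump s ^ n * cos (INR 0 * s))) in Hn by
      (intros; simpl; rewrite Rmult_0_l, cos_0; ring).
    fold (cos_coef (fun s => h s * bump s ^ n) 0) in Hn.
    rewrite (cos_coef_bump_pow h Hh Hm n 0) in Hn. exact (Rlt_irrefl _ Hn). }
  intros Hg Hm. destruct (Rtotal_order (g PI) 0) as [Hlt | [Heq | Hgt]].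
  - exfalso. apply (Hpos (fun s => - g s)); [| | lra].
    + intros s Hs. exact (continuous_opp g s (Hg s Hs)).
    + intros m. rewrite (cos_coef_ext _ (fun s => -1 * g s + 0 * g s)) by (intros; ring).
      rewrite cos_coef_lincomb, Hm by exact Hg. ring.
  - exact Heq.
  - exfalso. exact (Hpos g Hg Hm Hgt).
Qed.

(** * Rigidity of real harmonic functions *)

Definition affine_comb (al : R) (u : R -> R -> R) (be : R) (v : R -> R -> R) (ga : R) : R -> R -> R :=
  fun x y => al * u x y + be * v x y + ga.

Section AffineComb.

Variables (u v : R -> R -> R) (al be ga : R).
Hypotheses (Cu : C1 u) (Cv : C1 v).

Lemma is_derive_affine_comb_x (x y : R) :
  is_derive (fun t => affine_comb al u be v ga t y) x (al * px u x y + be * px v x y).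
Proof.
  eapply is_derive_val.
  - unfold affine_comb. apply is_derive_Rplus; [apply is_derive_Rplus | apply is_derive_Rconst].
    + apply is_derive_Rmult; [apply is_derive_Rconst | exact (C1_is_derive_x u Cu x y)].
    + apply is_derive_Rmult; [apply is_derive_Rconst | exact (C1_is_derive_x v Cv x y)].
  - cbv beta; ring.
Qed.

Lemma is_derive_affine_comb_y (x y : R) :
  is_derive (fun t => affine_comb al u be v ga x t) y (al * py u x y + be * py v x y).
Proof.
  eapply is_derive_val.
  - unfold affine_comb. apply is_derive_Rplus; [apply is_derive_Rplus | apply is_derive_Rconst].
    + apply is_derive_Rmult; [apply is_derive_Rconst | exact (C1_is_derive_y u Cu x y)].
    + apply is_derive_Rmult; [apply is_derive_Rconst | exact (C1_is_derive_y v Cv x y)].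
  - cbv beta; ring.
Qed.

Lemma px_affine_comb : px (affine_comb al u be v ga) = affine_comb al (px u) be (px v) 0.
Proof.
  apply functional_extensionality; intros x; apply functional_extensionality; intros y.
  unfold affine_comb at 2. rewrite Rplus_0_r. apply is_derive_unique, is_derive_affine_comb_x.
Qed.

Lemma py_affine_comb : py (affine_comb al u be v ga) = affine_comb al (py u) be (py v) 0.
Proof.
  apply functional_extensionality; intros x; apply functional_extensionality; intros y.
  unfold affine_comb at 2. rewrite Rplus_0_r. apply is_derive_unique, is_derive_affine_comb_y.
Qed.

Lemma C1_affine_comb : C1 (affine_comb al u be v ga).
Proof.
  pose proof (C1_continuous u Cu). pose proof (C1_continuous_px u Cu). pose proof (C1_continuous_py u Cu).
  pose proof (C1_continuous v Cv). pose proof (C1_continuous_px v Cv). pose proof (C1_continuous_py v Cv).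
  intros x y. rewrite px_affine_comb, py_affine_comb.
  repeat split; [eexists; apply is_derive_affine_comb_x | eexists; apply is_derive_affine_comb_y | ..];
    match goal with |- continuous (fun p => ?F (fst p) (snd p)) _ => change (continuous2 F x y) end;
    unfold affine_comb; continuous2_rules.
Qed.

End AffineComb.

Lemma harmonic_R_affine_comb u v al be ga :
  harmonic_R u -> harmonic_R v -> harmonic_R (affine_comb al u be v ga).
Proof.
  intros Hu Hv.
  pose proof (harmonic_R_C1 u Hu) as Cu. pose proof (harmonic_R_C1_px u Hu) as Cux.
  pose proof (harmonic_R_C1_py u Hu) as Cuy. pose proof (harmonic_R_C1 v Hv) as Cv.
  pose proof (harmonic_R_C1_px v Hv) as Cvx. pose proof (harmonic_R_C1_py v Hv) as Cvy.
  split; [split; [| split] |].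
  - now apply C1_affine_comb.
  - rewrite px_affine_comb by assumption. now apply C1_affine_comb.
  - rewrite py_affine_comb by assumption. now apply C1_affine_comb.
  - intros x y. rewrite px_affine_comb, py_affine_comb, px_affine_comb, py_affine_comb by assumption.
    unfold affine_comb.
    transitivity (al * (px (px u) x y + py (py u) x y) + be * (px (px v) x y + py (py v) x y)); [ring |].
    rewrite !harmonic_R_laplace by assumption; ring.
Qed.

Lemma exists_polar_coordinates p q a b :
  exists r ph, 0 <= r /\ p = a + r * cos (PI + ph) /\ q = b + r * sin (PI + ph).
Proof.
  set (X := p - a). set (Y := q - b). set (r := sqrt (X ^ 2 + Y ^ 2)).
  assert (Hrr : r * r = X ^ 2 + Y ^ 2) by (apply sqrt_sqrt; nra).
  destruct (Req_dec r 0) as [Hr | Hr].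
  { exists 0, 0. rewrite Hr in Hrr. rewrite !Rmult_0_l, !Rplus_0_r.
    assert (X = 0 /\ Y = 0) as [HX HY] by (split; apply Rsqr_0_uniq; unfold Rsqr; nra).
    unfold X, Y in *. repeat split; lra. }
  assert (Hpos : 0 < r) by (assert (0 <= r) by apply sqrt_pos; lra).
  set (x := X / r). set (y := Y / r).
  assert (Hxy : x ^ 2 + y ^ 2 = 1) by (unfold x, y; field_simplify; [rewrite <- Hrr; field |]; lra).
  assert (Hx : -1 <= x <= 1) by nra.
  assert (Hs : sqrt (1 - x²) = Rabs y) by (rewrite <- sqrt_Rsqr_abs; f_equal; unfold Rsqr; nra).
  destruct (Rle_dec 0 y) as [Hy | Hy].
  - exists r, (acos x - PI). replace (PI + (acos x - PI)) with (acos x) by ring.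
    rewrite cos_acos, sin_acos, Hs, Rabs_right by lra.
    unfold x, y, X, Y. split; [lra | split; field; lra].
  - exists r, (- acos x - PI). replace (PI + (- acos x - PI)) with (- acos x) by ring.
    rewrite cos_neg, sin_neg, cos_acos, sin_acos, Hs, Rabs_left by lra.
    unfold x, y, X, Y. split; [lra | split; field; lra].
Qed.

Definition in_disc (a b rho x y : R) : Prop := (x - a) ^ 2 + (y - b) ^ 2 < rho ^ 2.

Lemma monomial_bounded_zero A B k : (0 < k)%nat ->
  (forall r, 1 <= r -> Rabs (A * r ^ k) <= B) -> A = 0.
Proof.
  intros Hk HB. destruct (Req_dec A 0) as [| HA]; [assumption | exfalso].
  assert (HAp : 0 < Rabs A) by (apply Rabs_pos_lt, HA).
  assert (HB0 : 0 <= B) by (eapply Rle_trans; [apply Rabs_pos | apply (HB 1); lra]).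
  set (r := B / Rabs A + 1).
  assert (Hr : 1 <= r) by (unfold r; assert (0 <= B / Rabs A) by (apply Rdiv_le_0_compat; lra); lra).
  assert (Hrk : r <= r ^ k).
  { destruct k as [|k]; [lia |]. simpl. assert (1 <= r ^ k) by (apply pow_R1_Rle; lra). nra. }
  specialize (HB r Hr). rewrite Rabs_mult, (Rabs_right (r ^ k)) in HB by (apply Rle_ge, pow_le; lra).
  assert (Rabs A * r <= Rabs A * r ^ k) by (apply Rmult_le_compat_l; lra).
  assert (Rabs A * r = B + Rabs A) by (unfold r; field; lra).
  lra.
Qed.

Section HarmonicRigidity.

Variable u : R -> R -> R.
Hypothesis Hu : harmonic_R u.

Lemma continuous_polar_sub a b ph r c t : continuous (fun t => polar u a b ph r t - c) t.
Proof.
  apply (continuous_minus (polar u a b ph r) (fun _ => c));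
    [polar_slice_continuity Hu | apply continuous_const].
Qed.

Lemma cos_coef_polar_sub a b ph r c m :
  cos_coef (fun t => polar u a b ph r t - c) m
  = cos_coef (polar u a b ph r) m - c * cos_coef (fun _ => 1) m.
Proof.
  rewrite (cos_coef_ext _ (fun t => 1 * polar u a b ph r t + - c * 1)) by (intros; ring).
  rewrite cos_coef_lincomb by (intros t _; first [apply continuous_const | polar_slice_continuity Hu]).
  ring.
Qed.

(* By [cos_coef_polar_0] the restriction of [u - u a b] to each circle around [(a, b)] then has all
   its cosine coefficients zero; varying the phase, it vanishes at every angle. *)
Lemma harmonic_R_const_of_cos_coef a b :
  (forall ph k, (0 < k)%nat -> cos_coef (polar u a b ph 1) k = 0) -> forall p q, u p q = u a b.
Proof.
  intros Hk p q.
  destruct (exists_polar_coordinates p q a b) as [r [ph [Hr [-> ->]]]].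
  destruct (Req_dec r 0) as [-> | Hr0]; [now rewrite !Rmult_0_l, !Rplus_0_r |].
  assert (Hcoef : forall m, cos_coef (fun t => polar u a b ph r t - u a b) m = 0).
  { intros m. rewrite cos_coef_polar_sub, cos_coef_one. destruct m as [|m].
    - rewrite cos_coef_polar_0 by (exact Hu || lra). ring.
    - rewrite cos_coef_polar_pow, Hk by (exact Hu || lia || lra). ring. }
  pose proof (cos_coef_zero_at_PI _ (fun t _ => continuous_polar_sub a b ph r (u a b) t) Hcoef) as HPI.
  unfold polar in HPI. lra.
Qed.

Lemma harmonic_R_zero_of_disc a b rho : 0 < rho ->
  (forall x y, in_disc a b rho x y -> u x y = 0) -> forall x y, u x y = 0.
Proof.
  intros Hrho Hz. unfold in_disc in Hz.
  assert (Hab : u a b = 0) by (apply Hz; nra).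
  intros x y. rewrite <- Hab. apply harmonic_R_const_of_cos_coef. intros ph k Hk.
  assert (Hsmall : cos_coef (polar u a b ph (rho / 2)) k = 0).
  { rewrite (cos_coef_ext _ (fun _ => 0)), cos_coef_const; [ring |].
    intros t. unfold polar. apply Hz.
    replace ((a + rho / 2 * cos (t + ph) - a) ^ 2 + (b + rho / 2 * sin (t + ph) - b) ^ 2)
      with ((rho / 2) ^ 2 * (sin (t + ph) ^ 2 + cos (t + ph) ^ 2)) by ring.
    rewrite <- !Rsqr_pow2, sin2_cos2, !Rsqr_pow2. nra. }
  rewrite cos_coef_polar_pow in Hsmall by (exact Hu || lra).
  apply Rmult_integral in Hsmall as [H | H]; [exact H |].
  exfalso. exact (pow_nonzero (rho / 2) k ltac:(lra) H).
Qed.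

(* For [u >= c], [|u - c| = u - c], so every coefficient is bounded by the zeroth one. *)
Lemma cos_coef_polar_bound c a b ph k r : (forall x y, c <= u x y) -> (0 < k)%nat -> 0 < r ->
  Rabs (cos_coef (polar u a b ph r) k) <= 2 * PI * (u a b - c).
Proof.
  intros Hc Hk Hr. pose proof PI_RGT_0.
  set (h := fun t => polar u a b ph r t - c).
  assert (Hh : forall t, continuous h t) by apply continuous_polar_sub.
  replace (cos_coef (polar u a b ph r) k) with (cos_coef h k)
    by (unfold h; rewrite cos_coef_polar_sub, cos_coef_one; destruct k; [lia | ring]).
  replace (2 * PI * (u a b - c)) with (cos_coef h 0)
    by (unfold h; rewrite cos_coef_polar_sub, cos_coef_one, cos_coef_polar_0 by (exact Hu || lra); ring).
  eapply Rle_trans; [apply abs_RInt_le; [lra | apply ex_RInt_cos_coef; intros; apply Hh] |].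
  apply RInt_le; [lra | | apply ex_RInt_cos_coef; intros; apply Hh |].
  - apply (ex_RInt_continuous (V := R_CompleteNormedModule)). intros t _.
    apply continuous_Rabs_comp, (continuous_mult h); [apply Hh | apply continuous_cos_mul].
  - intros t _. pose proof (Hc (a + r * cos (t + ph)) (b + r * sin (t + ph))).
    assert (0 <= h t) by (unfold h, polar; lra).
    rewrite Rabs_mult, Rabs_right by lra. simpl INR. rewrite Rmult_0_l, cos_0.
    apply Rmult_le_compat_l; [lra | apply Rabs_le, COS_bound].
Qed.

Lemma harmonic_R_bounded_below_const c : (forall x y, c <= u x y) -> forall p q, u p q = u 0 0.
Proof.
  intros Hc. apply harmonic_R_const_of_cos_coef. intros ph k Hk.
  apply (monomial_bounded_zero _ (2 * PI * (u 0 0 - c)) k Hk). intros r Hr.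
  rewrite <- cos_coef_polar_pow by (exact Hu || lra).
  apply cos_coef_polar_bound; (exact Hc || exact Hk || lra).
Qed.

End HarmonicRigidity.

Lemma harmonic_R_bounded_above_const u c : harmonic_R u ->
  (forall x y, u x y <= c) -> forall p q, u p q = u 0 0.
Proof.
  intros Hu Hc p q.
  assert (Hneg := harmonic_R_bounded_below_const (affine_comb (-1) u 0 u 0)
    (harmonic_R_affine_comb u u (-1) 0 0 Hu Hu) (- c)).
  unfold affine_comb in Hneg. specialize (Hneg ltac:(intros x y; specialize (Hc x y); lra) p q). lra.
Qed.

(** * Values and level sets *)

Lemma continuous2_ivt (g : R -> R -> R) p1 q1 p2 q2 w : (forall x y, continuous2 g x y) ->
  g p1 q1 <= w -> w <= g p2 q2 -> exists p q, g p q = w.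
Proof.
  intros Hg H1 H2.
  set (h := fun s => g (p1 + s * (p2 - p1)) (q1 + s * (q2 - q1))).
  assert (Hh : continuity h).
  { intros s. apply continuity_pt_filterlim, (continuous2_slice (fun _ s => h s) 0 s).
    unfold h. apply (continuous2_comp g); [apply Hg | continuous2_rules ..]. }
  assert (Hw : Rmin (h 0) (h 1) <= w <= Rmax (h 0) (h 1)).
  { unfold h. rewrite !Rmult_0_l, !Rplus_0_r, !Rmult_1_l.
    replace (p1 + (p2 - p1)) with p2 by ring. replace (q1 + (q2 - q1)) with q2 by ring.
    unfold Rmin, Rmax. destruct (Rle_dec _ _); lra. }
  destruct (IVT_gen h 0 1 w Hh Hw) as [s [_ Hs]]. eauto.
Qed.

Lemma harmonic_R_surjective u : harmonic_R u -> (exists p q, u p q <> u 0 0) ->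
  forall w, exists p q, u p q = w.
Proof.
  intros Hu [p0 [q0 Hne]] w.
  assert (Habove : exists p q, w <= u p q).
  { apply NNPP. intros N. apply Hne. apply (harmonic_R_bounded_above_const u w Hu).
    intros x y. apply Rnot_lt_le. intros Hlt. apply N. exists x, y. lra. }
  assert (Hbelow : exists p q, u p q <= w).
  { apply NNPP. intros N. apply Hne. apply (harmonic_R_bounded_below_const u Hu w).
    intros x y. apply Rnot_lt_le. intros Hlt. apply N. exists x, y. lra. }
  destruct Habove as [p2 [q2 H2]]. destruct Hbelow as [p1 [q1 H1]].
  exact (continuous2_ivt u p1 q1 p2 q2 w (C1_continuous u (harmonic_R_C1 u Hu)) H1 H2).
Qed.

Lemma grad_zero_const_on_disc (g : R -> R -> R) a b rho :
  (forall x y, in_disc a b rho x y ->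
     is_derive (fun t => g t y) x 0 /\ is_derive (fun t => g x t) y 0) ->
  forall x y, in_disc a b rho x y -> g x y = g a b.
Proof.
  unfold in_disc. intros Hd x y Hxy.
  assert (Hsq : forall s t v, Rmin s t <= v <= Rmax s t -> (v - s) ^ 2 <= (t - s) ^ 2)
    by (intros s t v; unfold Rmin, Rmax; destruct (Rle_dec s t); intros; nra).
  pose proof (pow2_ge_0 (y - b)).
  transitivity (g x b).
  - apply (derive_zero_eq (fun t => g x t)); intros t Ht;
      [| apply (is_derive_continuity_pt _ _ 0)]; apply (Hd x t); pose proof (Hsq b y t ltac:(lra)); lra.
  - apply (derive_zero_eq (fun t => g t b)); intros t Ht;
      [| apply (is_derive_continuity_pt _ _ 0)]; apply (Hd t b); pose proof (Hsq a x t ltac:(lra));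
      replace ((b - b) ^ 2) with 0 by ring; lra.
Qed.

Lemma continuous_neg_locally (f : R -> R) x : continuous f x -> f x < 0 ->
  exists eps, 0 < eps /\ forall y, Rabs (y - x) < eps -> f y < 0.
Proof.
  intros Hf Hx. destruct (Hf _ (open_lt 0 _ Hx)) as [eps Heps].
  exists eps. split; [apply cond_pos | intros y Hy; apply Heps, Hy].
Qed.

Lemma sign_change_of_derive (f df : R -> R) (x1 : R) :
  (forall x, is_derive f x (df x)) -> continuous df x1 -> df x1 <> 0 ->
  exists xm xp, (f xm - f x1) * (f xp - f x1) < 0.
Proof.
  intros Hd Hc Hne.
  destruct (continuous_neg_locally (fun x => - (df x * df x1)) x1) as [eps [Heps Hsign]].
  - apply (continuous_opp (fun x => df x * df x1)), (continuous_mult df (fun _ => df x1));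
      [exact Hc | apply continuous_const].
  - assert (0 < df x1 * df x1) by (apply Rsqr_pos_lt, Hne). lra.
  - assert (Hmvt : forall x, Rabs (x - x1) < eps ->
                     exists c, Rabs (c - x1) < eps /\ f x - f x1 = df c * (x - x1)).
    { intros x Hx. destruct (MVT_gen f x1 x df) as [c [Hc' E]].
      - intros; apply Hd.
      - intros; apply (is_derive_continuity_pt _ _ _ (Hd _)).
      - exists c. split; [| exact E]. apply Rabs_def1; unfold Rmin, Rmax in Hc';
          destruct (Rle_dec x1 x); apply Rabs_def2 in Hx; lra. }
    destruct (Hmvt (x1 + eps / 2)) as [cp [Hcp Ep]]; [rewrite Rabs_right; lra |].
    destruct (Hmvt (x1 - eps / 2)) as [cm [Hcm Em]]; [rewrite Rabs_left; lra |].
    exists (x1 - eps / 2), (x1 + eps / 2). rewrite Em, Ep.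
    pose proof (Hsign cp Hcp). pose proof (Hsign cm Hcm).
    assert (0 < df cm * df cp * (df x1 * df x1)) by nra.
    assert (0 < df cm * df cp) by (assert (0 < df x1 * df x1) by (apply Rsqr_pos_lt, Hne); nra).
    match goal with |- ?L < 0 => replace L with (- (df cm * df cp) * (eps / 2 * (eps / 2))) by ring end.
    assert (0 < eps / 2 * (eps / 2)) by (apply Rmult_lt_0_compat; lra). nra.
Qed.

Definition level_set_infinite (g : R -> R -> R) (w : R) : Prop :=
  forall l : list (R * R), exists x y, g x y = w /\ ~ In (x, y) l.

Lemma exists_not_In (l : list R) a eps : 0 < eps -> exists y, a < y < a + eps /\ ~ In y l.
Proof.
  revert eps. induction l as [|h l IH]; intros eps Heps.
  - exists (a + eps / 2). split; [lra | intros []].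
  - destruct (IH (if Rlt_dec a h then Rmin eps (h - a) else eps)) as [y [Hy Hny]].
    + destruct (Rlt_dec a h); [apply Rmin_glb_lt |]; lra.
    + exists y. destruct (Rlt_dec a h) as [Hah | Hah].
      * pose proof (Rmin_l eps (h - a)). pose proof (Rmin_r eps (h - a)).
        split; [lra | intros [-> | Hin]; [lra | exact (Hny Hin)]].
      * split; [lra | intros [-> | Hin]; [lra | exact (Hny Hin)]].
Qed.

(* Where [g_x <> 0] the level line through [(x1, y1)] is crossed by every nearby horizontal line. *)
Lemma level_set_infinite_of_px g x1 y1 : C1 g -> px g x1 y1 <> 0 -> level_set_infinite g (g x1 y1).
Proof.
  intros Hg Hne l. pose proof (C1_continuous g Hg).
  destruct (sign_change_of_derive (fun t => g t y1) (fun t => px g t y1) x1) as [xm [xp Hsign]].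
  - intros; apply C1_is_derive_x, Hg.
  - apply continuous2_slice_fst, C1_continuous_px, Hg.
  - exact Hne.
  destruct (continuous_neg_locally (fun y => (g xm y - g x1 y1) * (g xp y - g x1 y1)) y1)
    as [eps [Heps Hnear]]; [| exact Hsign |].
  { apply (continuous2_slice (fun _ y => (g xm y - g x1 y1) * (g xp y - g x1 y1)) 0). continuous2_rules. }
  destruct (exists_not_In (map snd l) y1 eps Heps) as [y [Hy Hny]].
  specialize (Hnear y ltac:(apply Rabs_def1; lra)).
  destruct (IVT_gen (fun t => g t y) xm xp (g x1 y1)) as [x [_ Hx]].
  - intros t. apply continuity_pt_filterlim, continuous2_slice_fst, C1_continuous, Hg.
  - unfold Rmin, Rmax. destruct (Rle_dec _ _); split; nra.
  - exists x, y. split; [exact Hx |]. intros Hin. exact (Hny (in_map snd l (x, y) Hin)).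
Qed.

Lemma C1_swap g : C1 g -> C1 (fun x y => g y x).
Proof.
  intros Hg x y. split; [| split; [| split; [| split]]].
  - apply (C1_ex_derive_y g Hg).
  - apply (C1_ex_derive_x g Hg).
  - exact (continuous2_swap g x y (C1_continuous g Hg y x)).
  - exact (continuous2_swap (py g) x y (C1_continuous_py g Hg y x)).
  - exact (continuous2_swap (px g) x y (C1_continuous_px g Hg y x)).
Qed.

Lemma level_set_infinite_swap g w : level_set_infinite (fun x y => g y x) w -> level_set_infinite g w.
Proof.
  intros H l. destruct (H (map (fun p => (snd p, fst p)) l)) as [x [y [E Hn]]].
  exists y, x. split; [exact E |]. intros Hin. exact (Hn (in_map _ l (y, x) Hin)).
Qed.

Lemma level_set_infinite_of_nonconst g : C1 g -> (exists p q, g p q <> g 0 0) ->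
  exists w, level_set_infinite g w.
Proof.
  intros Hg [p [q Hne]].
  destruct (classic (exists x y, px g x y <> 0 \/ py g x y <> 0)) as [[x [y [Hx | Hy]]] | Hflat].
  - exists (g x y). now apply level_set_infinite_of_px.
  - exists (g x y). apply level_set_infinite_swap.
    exact (level_set_infinite_of_px (fun x y => g y x) y x (C1_swap g Hg) Hy).
  - exfalso. apply Hne, (grad_zero_const_on_disc g 0 0 (Rabs p + Rabs q + 1)).
    + intros x y _.
      destruct (Req_dec (px g x y) 0) as [Ex | Ex]; [| exfalso; apply Hflat; eauto].
      destruct (Req_dec (py g x y) 0) as [Ey | Ey]; [| exfalso; apply Hflat; eauto].
      split; [rewrite <- Ex; apply C1_is_derive_x | rewrite <- Ey; apply C1_is_derive_y]; exact Hg.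
    + unfold in_disc. rewrite !Rminus_0_r, <- (pow2_abs p), <- (pow2_abs q).
      pose proof (Rabs_pos p). pose proof (Rabs_pos q). nra.
Qed.

(** * Vanishing Jacobian *)

Lemma continuous2_pos_locally F (x y : R) : continuous2 F x y -> 0 < F x y ->
  locally (x, y) (fun p => 0 < F (fst p) (snd p)).
Proof. intros HF Hpos. exact (HF _ (open_gt 0 _ Hpos)). Qed.

Lemma locally_in_disc (P : R * R -> Prop) (x y : R) : locally (x, y) P ->
  exists rho, 0 < rho /\ forall x' y', in_disc x y rho x' y' -> P (x', y').
Proof.
  intros [eps Heps]. exists eps. split; [apply cond_pos |]. intros x' y' Hd.
  unfold in_disc in Hd. pose proof (cond_pos eps).
  pose proof (pow2_ge_0 (x' - x)). pose proof (pow2_ge_0 (y' - y)).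
  apply Heps. split; [change (Rabs (x' - x) < eps) | change (Rabs (y' - y) < eps)]; apply Rabs_def1; nra.
Qed.

Lemma in_disc_locally (a b r x y : R) : in_disc a b r x y ->
  locally (x, y) (fun p => in_disc a b r (fst p) (snd p)).
Proof.
  intros Hd. apply (filter_imp (fun p => 0 < r ^ 2 - ((fst p - a) ^ 2 + (snd p - b) ^ 2))).
  - intros [p1 p2] Hp. unfold in_disc. simpl in *. lra.
  - apply (continuous2_pos_locally (fun x y => r ^ 2 - ((x - a) ^ 2 + (y - b) ^ 2))); [continuous2_rules |].
    unfold in_disc in Hd. lra.
Qed.

Lemma locally_of_disc (P : R -> R -> Prop) (x y rho : R) : 0 < rho ->
  (forall x' y', in_disc x y rho x' y' -> P x' y') ->
  locally x (fun t => P t y) /\ locally y (fun t => P x t).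
Proof.
  intros Hrho HP. split; exists (mkposreal rho Hrho); intros t Ht; apply HP; unfold in_disc.
  - change (Rabs (t - x) < rho) in Ht. apply Rabs_def2 in Ht. nra.
  - change (Rabs (t - y) < rho) in Ht. apply Rabs_def2 in Ht. nra.
Qed.

Lemma is_derive_locally_mult (f l g : R -> R) (x df dl dg : R) :
  locally x (fun t => f t = l t * g t) ->
  is_derive f x df -> is_derive l x dl -> is_derive g x dg -> df = dl * g x + l x * dg.
Proof.
  intros Hloc Hf Hl Hg.
  rewrite <- (is_derive_unique _ _ _ (is_derive_ext_loc _ _ _ _ Hloc Hf)).
  exact (is_derive_unique _ _ _ (is_derive_Rmult _ _ _ _ _ Hl Hg)).
Qed.

Lemma px_mult_on_disc F l G a b rho x y Lx : C1 F -> C1 G -> in_disc a b rho x y ->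
  (forall x' y', in_disc a b rho x' y' -> F x' y' = l x' y' * G x' y') ->
  is_derive (fun t => l t y) x Lx -> px F x y = Lx * G x y + l x y * px G x y.
Proof.
  intros CF CG Hd Heq Hl.
  destruct (locally_in_disc _ x y (in_disc_locally a b rho x y Hd)) as [r [Hr Hsub]].
  destruct (locally_of_disc (fun x' y' => F x' y' = l x' y' * G x' y') x y r Hr) as [Hloc _];
    [intros x' y' H'; apply Heq, (Hsub x' y' H') |].
  exact (is_derive_locally_mult _ _ _ _ _ _ _ Hloc (C1_is_derive_x F CF x y) Hl (C1_is_derive_x G CG x y)).
Qed.

Lemma py_mult_on_disc F l G a b rho x y Ly : C1 F -> C1 G -> in_disc a b rho x y ->
  (forall x' y', in_disc a b rho x' y' -> F x' y' = l x' y' * G x' y') ->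
  is_derive (fun t => l x t) y Ly -> py F x y = Ly * G x y + l x y * py G x y.
Proof.
  intros CF CG Hd Heq Hl.
  destruct (locally_in_disc _ x y (in_disc_locally a b rho x y Hd)) as [r [Hr Hsub]].
  destruct (locally_of_disc (fun x' y' => F x' y' = l x' y' * G x' y') x y r Hr) as [_ Hloc];
    [intros x' y' H'; apply Heq, (Hsub x' y' H') |].
  exact (is_derive_locally_mult _ _ _ _ _ _ _ Hloc (C1_is_derive_y F CF x y) Hl (C1_is_derive_y G CG x y)).
Qed.

Lemma C2_px_py_comm g : C2 g -> forall x y, px (py g) x y = py (px g) x y.
Proof.
  intros [H1 [Hx Hy]] x y. unfold px, py. apply Schwarz.
  - exists (mkposreal 1 Rlt_0_1). intros u v _ _.
    exact (conj (C1_ex_derive_x g H1 u v) (conj (C1_ex_derive_y g H1 u v)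
             (conj (C1_ex_derive_x (py g) Hy u v) (C1_ex_derive_y (px g) Hx u v)))).
  - exact (continuous2_2d_pt _ _ _ (C1_continuous_px (py g) Hy x y)).
  - exact (continuous2_2d_pt _ _ _ (C1_continuous_py (px g) Hx x y)).
Qed.

Lemma orthogonal_parallel_zero ux uy lx ly : 0 < ux ^ 2 + uy ^ 2 ->
  lx * ux + ly * uy = 0 -> ly * ux = lx * uy -> lx = 0 /\ ly = 0.
Proof.
  intros HN Horth Hpar.
  assert (Hx : lx * (ux ^ 2 + uy ^ 2) = 0)
    by (transitivity (ux * (lx * ux + ly * uy) + uy * (lx * uy - ly * ux));
        [ring | rewrite Horth, Hpar; ring]).
  assert (Hy : ly * (ux ^ 2 + uy ^ 2) = 0)
    by (transitivity (uy * (lx * ux + ly * uy) - ux * (lx * uy - ly * ux));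
        [ring | rewrite Horth, Hpar; ring]).
  split; [apply Rmult_integral in Hx | apply Rmult_integral in Hy]; lra.
Qed.

Definition grad_sq (u : R -> R -> R) (x y : R) : R := px u x y ^ 2 + py u x y ^ 2.

Definition grad_ratio (u v : R -> R -> R) (x y : R) : R :=
  (px v x y * px u x y + py v x y * py u x y) / grad_sq u x y.

Section GradRatio.

Variables (u v : R -> R -> R) (x1 y1 rho : R).
Hypotheses (Hu : harmonic_R u) (Hv : harmonic_R v).
Hypothesis HN : forall x y, in_disc x1 y1 rho x y -> 0 < grad_sq u x y.
Hypothesis HJ : forall x y, in_disc x1 y1 rho x y -> px u x y * py v x y - py u x y * px v x y = 0.

Lemma grad_ratio_spec x y : in_disc x1 y1 rho x y ->
  px v x y = grad_ratio u v x y * px u x y /\ py v x y = grad_ratio u v x y * py u x y.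
Proof.
  intros Hd. pose proof (HN x y Hd) as HNxy. pose proof (HJ x y Hd) as HJxy.
  unfold grad_ratio, grad_sq in *.
  set (ux := px u x y) in *. set (uy := py u x y) in *.
  set (vx := px v x y) in *. set (vy := py v x y) in *.
  split.
  - replace ((vx * ux + vy * uy) / (ux ^ 2 + uy ^ 2) * ux)
      with ((vx * (ux ^ 2 + uy ^ 2) + uy * (ux * vy - uy * vx)) / (ux ^ 2 + uy ^ 2)) by (field; lra).
    rewrite HJxy. field. lra.
  - replace ((vx * ux + vy * uy) / (ux ^ 2 + uy ^ 2) * uy)
      with ((vy * (ux ^ 2 + uy ^ 2) - ux * (ux * vy - uy * vx)) / (ux ^ 2 + uy ^ 2)) by (field; lra).
    rewrite HJxy. field. lra.
Qed.

Lemma ex_derive_grad_ratio x y : in_disc x1 y1 rho x y ->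
  ex_derive (fun t => grad_ratio u v t y) x /\ ex_derive (fun t => grad_ratio u v x t) y.
Proof.
  intros Hd. pose proof (HN x y Hd) as HNxy.
  pose proof (harmonic_R_C1_px u Hu). pose proof (harmonic_R_C1_py u Hu).
  pose proof (harmonic_R_C1_px v Hv). pose proof (harmonic_R_C1_py v Hv).
  unfold grad_ratio, grad_sq in *. split; ex_derive_rules; try lra;
    match goal with
    | |- ex_derive (fun t => ?g t _) _ => apply (C1_ex_derive_x g); assumption
    | |- ex_derive (fun t => ?g _ t) _ => apply (C1_ex_derive_y g); assumption
    end.
Qed.

(* Differentiating [grad v = lam grad u] and using [u_xy = u_yx], [v_xy = v_yx] and the two Laplace
   equations shows that [grad lam] is both parallel and orthogonal to [grad u <> 0]. *)
Lemma grad_ratio_derive_zero x y : in_disc x1 y1 rho x y ->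
  is_derive (fun t => grad_ratio u v t y) x 0 /\ is_derive (fun t => grad_ratio u v x t) y 0.
Proof.
  intros Hd. destruct (ex_derive_grad_ratio x y Hd) as [[Lx HLx] [Ly HLy]].
  set (lam := grad_ratio u v).
  pose proof (harmonic_R_C1_px u Hu) as Cux. pose proof (harmonic_R_C1_py u Hu) as Cuy.
  pose proof (harmonic_R_C1_px v Hv) as Cvx. pose proof (harmonic_R_C1_py v Hv) as Cvy.
  pose proof (fun x' y' H => proj1 (grad_ratio_spec x' y' H)) as Hvx.
  pose proof (fun x' y' H => proj2 (grad_ratio_spec x' y' H)) as Hvy.
  pose proof (py_mult_on_disc (px v) lam (px u) x1 y1 rho x y Ly Cvx Cux Hd Hvx HLy).
  pose proof (px_mult_on_disc (py v) lam (py u) x1 y1 rho x y Lx Cvy Cuy Hd Hvy HLx).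
  pose proof (px_mult_on_disc (px v) lam (px u) x1 y1 rho x y Lx Cvx Cux Hd Hvx HLx).
  pose proof (py_mult_on_disc (py v) lam (py u) x1 y1 rho x y Ly Cvy Cuy Hd Hvy HLy).
  pose proof (C2_px_py_comm u (proj1 Hu) x y). pose proof (C2_px_py_comm v (proj1 Hv) x y).
  pose proof (harmonic_R_laplace u Hu x y). pose proof (harmonic_R_laplace v Hv x y).
  destruct (orthogonal_parallel_zero (px u x y) (py u x y) Lx Ly (HN x y Hd)) as [-> ->].
  - nra.
  - nra.
  - split; assumption.
Qed.

Lemma affine_comb_grad_ratio_const x y : in_disc x1 y1 rho x y ->
  affine_comb (- grad_ratio u v x1 y1) u 1 v 0 x y = affine_comb (- grad_ratio u v x1 y1) u 1 v 0 x1 y1.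
Proof.
  pose proof (harmonic_R_C1 u Hu). pose proof (harmonic_R_C1 v Hv).
  apply grad_zero_const_on_disc. intros x' y' Hd.
  assert (Hlam : grad_ratio u v x' y' = grad_ratio u v x1 y1)
    by exact (grad_zero_const_on_disc _ x1 y1 rho grad_ratio_derive_zero x' y' Hd).
  destruct (grad_ratio_spec x' y' Hd) as [Ex Ey]. rewrite Hlam in Ex, Ey.
  split; eapply is_derive_val; [apply is_derive_affine_comb_x | lra | apply is_derive_affine_comb_y | lra];
    assumption.
Qed.

End GradRatio.

Lemma harmonic_R_jacobian_zero_relation u v a b r0 : harmonic_R u -> harmonic_R v -> 0 < r0 ->
  (forall x y, in_disc a b r0 x y -> px u x y * py v x y - py u x y * px v x y = 0) ->
  exists al be ga a' b' rho, (al <> 0 \/ be <> 0) /\ 0 < rho /\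
    forall x y, in_disc a' b' rho x y -> affine_comb al u be v ga x y = 0.
Proof.
  intros Hu Hv Hr0 HJ.
  pose proof (harmonic_R_C1 u Hu) as Cu. pose proof (harmonic_R_C1 v Hv) as Cv.
  destruct (classic (exists x1 y1, in_disc a b r0 x1 y1 /\ 0 < grad_sq u x1 y1))
    as [[x1 [y1 [Hin HN1]]] | Hflat].
  - assert (Hloc : locally (x1, y1) (fun p => 0 < grad_sq u (fst p) (snd p)
                                            /\ in_disc a b r0 (fst p) (snd p))).
    { apply filter_and; [| exact (in_disc_locally a b r0 x1 y1 Hin)].
      apply continuous2_pos_locally; [| exact HN1].
      pose proof (C1_continuous_px u Cu). pose proof (C1_continuous_py u Cu).
      unfold grad_sq. continuous2_rules. }
    destruct (locally_in_disc _ x1 y1 Hloc) as [rho [Hrho Hsub]].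
    assert (HN : forall x y, in_disc x1 y1 rho x y -> 0 < grad_sq u x y)
      by (intros; apply Hsub; assumption).
    assert (HJ1 : forall x y, in_disc x1 y1 rho x y -> px u x y * py v x y - py u x y * px v x y = 0)
      by (intros; apply HJ, Hsub; assumption).
    exists (- grad_ratio u v x1 y1), 1, (- affine_comb (- grad_ratio u v x1 y1) u 1 v 0 x1 y1), x1, y1, rho.
    split; [right; lra | split; [exact Hrho |]]. intros x y Hxy.
    rewrite <- (affine_comb_grad_ratio_const u v x1 y1 rho Hu Hv HN HJ1 x y Hxy). unfold affine_comb. ring.
  - exists 1, 0, (- u a b), a, b, r0. split; [left; lra | split; [exact Hr0 |]].
    intros x y Hxy. unfold affine_comb.
    rewrite (grad_zero_const_on_disc u a b r0); [ring | | exact Hxy].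
    intros x' y' Hxy'.
    assert (Hgrad : px u x' y' = 0 /\ py u x' y' = 0).
    { assert (grad_sq u x' y' <= 0) by (apply Rnot_lt_le; intros Hpos; apply Hflat; eauto).
      unfold grad_sq in *. split; nra. }
    destruct Hgrad as [Ex Ey].
    split; [rewrite <- Ex; apply C1_is_derive_x | rewrite <- Ey; apply C1_is_derive_y]; exact Cu.
Qed.

(** * The image of [f] *)

Lemma jacobian_zero_of_relation u v al be ga : C1 u -> C1 v -> (al <> 0 \/ be <> 0) ->
  (forall x y, affine_comb al u be v ga x y = 0) ->
  forall x y, px u x y * py v x y - py u x y * px v x y = 0.
Proof.
  intros Cu Cv Hab Hrel x y.
  assert (Hx : al * px u x y + be * px v x y = 0).
  { pose proof (is_derive_ext _ _ _ _ (fun t => Hrel t y)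
                  (is_derive_affine_comb_x u v al be ga Cu Cv x y)) as H.
    rewrite <- (is_derive_unique _ _ _ H). exact (is_derive_unique _ _ _ (is_derive_Rconst 0 x)). }
  assert (Hy : al * py u x y + be * py v x y = 0).
  { pose proof (is_derive_ext _ _ _ _ (fun t => Hrel x t)
                  (is_derive_affine_comb_y u v al be ga Cu Cv x y)) as H.
    rewrite <- (is_derive_unique _ _ _ H). exact (is_derive_unique _ _ _ (is_derive_Rconst 0 y)). }
  destruct Hab as [Hal | Hbe].
  - apply (Rmult_eq_reg_l al); [| exact Hal].
    transitivity (py v x y * (al * px u x y + be * px v x y) - px v x y * (al * py u x y + be * py v x y));
      [ring | rewrite Hx, Hy; ring].
  - apply (Rmult_eq_reg_l be); [| exact Hbe].
    transitivity (px u x y * (al * py u x y + be * py v x y) - py u x y * (al * px u x y + be * px v x y));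
      [ring | rewrite Hx, Hy; ring].
Qed.

(* Solving [al X + be Y + ga = 0] for the point [(X, Y)] of the line through [a0] with direction
   [(- be, al)]. *)
Lemma affine_relation_param (u v : R -> R -> R) al be ga x y : (al <> 0 \/ be <> 0) ->
  affine_comb al u be v ga x y = 0 ->
  (u x y, v x y)
  = (((- ga * al / (al ^ 2 + be ^ 2))%R, (- ga * be / (al ^ 2 + be ^ 2))%R)
     + RtoC (affine_comb (- be / (al ^ 2 + be ^ 2)) u (al / (al ^ 2 + be ^ 2)) v 0 x y) * ((- be)%R, al))%C.
Proof.
  intros Hab Hrel.
  assert (HN : al ^ 2 + be ^ 2 <> 0) by (destruct Hab; nra).
  assert (Hga : ga = - (al * u x y + be * v x y)) by (unfold affine_comb in Hrel; lra).
  unfold affine_comb, Cplus, Cmult, RtoC; simpl. rewrite Hga.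
  f_equal; field; simpl in HN; rewrite !Rmult_1_r in HN; exact HN.
Qed.

Lemma level_set_infinite_const g c : (forall x y, g x y = c) -> level_set_infinite g c.
Proof.
  intros Hg l. destruct (exists_not_In (map fst l) 0 1 Rlt_0_1) as [x [_ Hx]].
  exists x, 0. split; [apply Hg |]. intros Hin. exact (Hx (in_map fst l (x, 0) Hin)).
Qed.

Lemma Val_infinite_of_level_set (f : C -> C) t (a0 b0 : C) s :
  (forall x y, f (x, y) = (a0 + RtoC (t x y) * b0)%C) -> level_set_infinite t s ->
  Val_infinite f (a0 + RtoC s * b0)%C.
Proof.
  intros Hf Ht [l Hl]. destruct (Ht l) as [x [y [E Hn]]].
  apply Hn, Hl. rewrite Hf, E. reflexivity.
Qed.

Lemma image_of_harmonic_param (f : C -> C) t (a0 b0 : C) : harmonic_R t -> b0 <> 0%C ->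
  (forall x y, f (x, y) = (a0 + RtoC (t x y) * b0)%C) ->
  (image_is_point f \/ image_is_line f) /\ exists w0, Val_infinite f w0.
Proof.
  intros Ht Hb Hf.
  destruct (classic (forall x y, t x y = t 0 0)) as [Hc | Hnc].
  - split.
    + left. exists (a0 + RtoC (t 0 0) * b0)%C. intros [x y]. now rewrite Hf, Hc.
    + eexists. exact (Val_infinite_of_level_set f t a0 b0 _ Hf (level_set_infinite_const t _ Hc)).
  - assert (Hne : exists p q, t p q <> t 0 0).
    { apply NNPP. intros N. apply Hnc. intros x y. apply NNPP. intros E. apply N. eauto. }
    split.
    + right. exists a0, b0. split; [exact Hb |]. intros w. split.
      * intros [[x y] <-]. exists (t x y). apply Hf.
      * intros [s ->]. destruct (harmonic_R_surjective t Ht Hne s) as [p [q Hpq]].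
        exists (p, q). now rewrite Hf, Hpq.
    + destruct (level_set_infinite_of_nonconst t (harmonic_R_C1 t Ht) Hne) as [s Hs].
      eexists. exact (Val_infinite_of_level_set f t a0 b0 s Hf Hs).
Qed.

Lemma Cmod_lt_of_in_disc a b r x y : 0 < r -> in_disc a b r x y -> Cmod ((x, y) - (a, b))%C < r.
Proof.
  intros Hr Hd. change (sqrt ((x - a) ^ 2 + (y - b) ^ 2) < r).
  rewrite <- (sqrt_pow2 r) by lra. apply sqrt_lt_1_alt.
  pose proof (pow2_ge_0 (x - a)). pose proof (pow2_ge_0 (y - b)). split; [lra | exact Hd].
Qed.

Lemma C_eta_ure_vim (f : C -> C) x y : f (x, y) = (ure f x y, vim f x y).
Proof. apply surjective_pairing. Qed.

Theorem lemma5p1 (f : C -> C) :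
  harmonic f -> interior_S_nonempty f ->
  (image_is_point f \/ image_is_line f) /\
  (forall z : C, inS f z) /\
  (exists w0 : C, Val_infinite f w0).
Proof.
  intros [Hu Hv] [z0 [r [Hr Hin]]].
  assert (HJ : forall x y, in_disc (fst z0) (snd z0) r x y -> jac f x y = 0)
    by (intros x y Hxy; apply (Hin (x, y)), Cmod_lt_of_in_disc; assumption).
  destruct (harmonic_R_jacobian_zero_relation _ _ _ _ r Hu Hv Hr HJ)
    as (al & be & ga & a & b & rho & Hab & Hrho & Hdisc).
  assert (Hrel := harmonic_R_zero_of_disc _ (harmonic_R_affine_comb _ _ al be ga Hu Hv) a b rho Hrho Hdisc).
  pose (N := al ^ 2 + be ^ 2).
  destruct (image_of_harmonic_param f (affine_comb (- be / N) (ure f) (al / N) (vim f) 0)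
              ((- ga * al / N)%R, (- ga * be / N)%R) ((- be)%R, al)) as [Himage Hval].
  - apply harmonic_R_affine_comb; assumption.
  - intros E. injection E. destruct Hab; lra.
  - intros x y. rewrite C_eta_ure_vim. exact (affine_relation_param _ _ al be ga x y Hab (Hrel x y)).
  - split; [exact Himage | split; [| exact Hval]]. intros [x y].
    exact (jacobian_zero_of_relation _ _ al be ga (harmonic_R_C1 _ Hu) (harmonic_R_C1 _ Hv) Hab Hrel x y).
Qed.
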